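(* Let $A_1,\dots,A_k$ be independent events with probabilities $p_1,\dots,p_k$, and let $r_1,\dots,r_k\ge 0$ be constants such that for every $S\subseteq\{1,\dots,k\}$, $$\sum_{i\in S} r_i \le 1-\prod_{i\in S}(1-p_i).$$ Then there is a probability distribution over permutations $\pi$ of $\{1,\dots,k\}$ such that, when $\pi$ is drawn from this distribution independently of the events, for every $i$, $$\Pr\big(A_i \text{ is the earliest occurring event in } \pi\big)\ \ge\ r_i,$$ where ''$A_i$ is the earliest occurring event in $\pi$'' means that $A_i$ occurs and no $A_j$ with $j$ preceding $i$ in $\pi$ occurs. *)

From HB Require Import structures.
From mathcomp Require Import all_boot all_order all_algebra all_fingroup.
Set Implicit Arguments. Unset Strict Implicit. Unset Printing Implicit Defensive.
Import Order.TTheory GRing.Theory Num.Theory.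
Local Open Scope ring_scope.

Definition is_distr (R : realFieldType) (T : finType) (mu : T -> R) : Prop :=
  (forall w, 0 <= mu w) /\ \sum_(w : T) mu w = 1.

Definition Pr (R : realFieldType) (T : finType) (mu : T -> R) (E : {set T}) : R :=
  \sum_(w in E) mu w.

Definition mutually_independent (R : realFieldType) (T : finType) (k : nat)
    (mu : T -> R) (A : 'I_k -> {set T}) : Prop :=
  forall S : {set 'I_k},
    Pr mu (\bigcap_(i in S) A i) = \prod_(i in S) Pr mu (A i).

(* "A_i is the earliest occurring event in pi": A_i occurs and no A_j with j
   preceding i in pi occurs.  Convention: pi j is the position of j, so
   j precedes i iff pi j < pi i. *)
Definition first_event (T : finType) (k : nat) (A : 'I_k -> {set T})
    (pi : {perm 'I_k}) (i : 'I_k) : {set T} :=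
  A i :&: \bigcap_(j | (pi j < pi i)%N) ~: A j.

(* Write miss S = prod_{j in S} (1 - p_j) for the probability that no event
   A_j with j in S occurs.  If the events are scanned in the order of a
   sequence s, independence gives
     Pr(A_i is the first occurring event) = p_i * miss {j before i in s},
   the "first weight" of i in s.  A vector r is feasible on V when
   sum_{i in S} r_i <= 1 - miss S for every S included in V, and achievable on
   V when it is dominated by a convex combination of first-weight vectors of
   orderings of V.  The core of the file proves that feasible vectors are
   achievable, by induction on |V|:
   - if some nonempty proper S is tight (its constraint is an equality),
     concatenating orderings of S with orderings of V \ S reduces the problem
     to S and to V \ S with r rescaled by 1 / miss S;
   - otherwise, for i <> j in V, r can be pushed along e_i - e_j and along
     e_j - e_i until a proper set becomes tight, and r is a convex combination
     of the two pushed vectors. *)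

From HB Require Import structures.
From mathcomp Require Import all_boot all_order all_algebra all_fingroup.
From mathcomp Require Import ring lra.
Import Order.TTheory GRing.Theory Num.Theory.
Local Open Scope ring_scope.

Set Implicit Arguments. Unset Strict Implicit.

Section Orderings.
Variable R : realFieldType.
Variable k : nat.
Variable p : 'I_k -> R.
Hypothesis p_ge0 : forall i, 0 <= p i.
Hypothesis p_le1 : forall i, p i <= 1.

Definition miss (S : {set 'I_k}) : R := \prod_(j in S) (1 - p j).

Lemma miss_ge0 S : 0 <= miss S.
Proof. by apply: prodr_ge0 => j _; rewrite subr_ge0. Qed.

Lemma miss_le1 S : miss S <= 1.
Proof. by apply: prodr_ile1 => j _; rewrite subr_ge0 p_le1 gerBl p_ge0. Qed.

Lemma missU (S T : {set 'I_k}) : [disjoint S & T] -> miss (S :|: T) = miss S * miss T.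
Proof. by move=> dST; rewrite /miss -bigU //; apply: eq_bigl => j; rewrite !inE. Qed.

Lemma sumU (S T : {set 'I_k}) (r : 'I_k -> R) : [disjoint S & T] ->
  \sum_(x in S :|: T) r x = \sum_(x in S) r x + \sum_(x in T) r x.
Proof. by move=> dST; rewrite -bigU //; apply: eq_bigl => x; rewrite !inE. Qed.

Definition first_weight (s : seq 'I_k) (i : 'I_k) : R :=
  p i * \prod_(j | (index j s < index i s)%N) (1 - p j).

Definition ordering (V : {set 'I_k}) (s : seq 'I_k) := uniq s /\ s =i V.

Definition feasible (V : {set 'I_k}) (r : 'I_k -> R) :=
  forall S : {set 'I_k}, S \subset V -> \sum_(i in S) r i <= 1 - miss S.

Definition achievable (V : {set 'I_k}) (r : 'I_k -> R) :=
  exists m : seq (R * seq 'I_k),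
    [/\ forall x, x \in m -> 0 <= x.1 /\ ordering V x.2,
        \sum_(x <- m) x.1 = 1 &
        forall i, i \in V -> r i <= \sum_(x <- m) x.1 * first_weight x.2 i].

Lemma achievable_mono V r r' : achievable V r' ->
  (forall i, i \in V -> r i <= r' i) -> achievable V r.
Proof.
case=> m [hm m1 hr'] le_rr'; exists m; split=> // i iV.
exact: le_trans (le_rr' i iV) (hr' i iV).
Qed.

Lemma achievable_conv V r1 r2 a b : achievable V r1 -> achievable V r2 ->
  0 <= a -> 0 <= b -> a + b = 1 -> achievable V (fun i => a * r1 i + b * r2 i).
Proof.
case=> m1 [h1 s1 v1] [m2 [h2 s2 v2]] a0 b0 ab.
exists ([seq (a * x.1, x.2) | x <- m1] ++ [seq (b * x.1, x.2) | x <- m2]).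
split.
- move=> x; rewrite mem_cat => /orP [] /mapP [y ym ->] /=.
    by case: (h1 y ym) => y0 oy; rewrite mulr_ge0.
  by case: (h2 y ym) => y0 oy; rewrite mulr_ge0.
- by rewrite big_cat !big_map /= -!mulr_sumr s1 s2 !mulr1.
- move=> i iV; rewrite big_cat !big_map /=.
  under eq_bigr do rewrite -mulrA.
  under [X in _ <= _ + X]eq_bigr do rewrite -mulrA.
  rewrite -!mulr_sumr; apply: lerD; apply: ler_wpM2l => //; [exact: v1|exact: v2].
Qed.

(* If r is achievable both after a positive step along d and after a
   positive step along -d, it is achievable: r lies between the two. *)
Lemma achievable_between V r (d : 'I_k -> R) t1 t2 : 0 < t1 -> 0 < t2 ->
  achievable V (fun x => r x + t1 * d x) -> achievable V (fun x => r x - t2 * d x) ->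
  achievable V r.
Proof.
move=> t1_gt0 t2_gt0 h1 h2.
have t12 : t1 + t2 != 0 by rewrite gt_eqF // addr_gt0.
have := achievable_conv h1 h2 (a := t2 / (t1 + t2)) (b := t1 / (t1 + t2)).
move=> /(_ _ _ _) mix; apply: (achievable_mono (mix _ _ _)) => [||| x _].
- by rewrite divr_ge0 // ltW // addr_gt0.
- by rewrite divr_ge0 // ltW // addr_gt0.
- by field.
- by rewrite le_eqVlt; apply/orP; left; apply/eqP; field.
Qed.

Lemma achievable0 r : achievable set0 r.
Proof.
exists [:: (1, [::])]; split.
- by move=> x; rewrite inE => /eqP -> /=; split=> //; split=> // j; rewrite inE.
- by rewrite big_seq1.
- by move=> i; rewrite inE.
Qed.

Lemma achievable1 i r : r i <= p i -> achievable [set i] r.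
Proof.
move=> ri; exists [:: (1, [:: i])]; split.
- by move=> x; rewrite inE => /eqP -> /=; split=> //; split=> // j; rewrite !inE.
- by rewrite big_seq1.
- move=> j; rewrite inE => /eqP ->; rewrite big_seq1 mul1r /first_weight /= eqxx.
  by rewrite big_pred0 ?mulr1 // => j'; rewrite ltn0.
Qed.

Lemma achievable_small (V : {set 'I_k}) r : (#|V| <= 1)%N -> feasible V r -> achievable V r.
Proof.
move=> V_le1 fr; have [V0|V_gt0] := posnP #|V|.
  by rewrite (cards0_eq V0); apply: achievable0.
have /cards1P [i Vi] : #|V| == 1%N by rewrite eqn_leq V_le1.
rewrite Vi in fr *; apply: achievable1; have := fr [set i] (subxx _).
by rewrite big_set1 /miss big_set1 opprB addrC subrK.
Qed.

Lemma first_weight_catl s1 s2 i : i \in s1 ->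
  first_weight (s1 ++ s2) i = first_weight s1 i.
Proof.
move=> is1; rewrite /first_weight; congr (_ * _); apply: eq_bigl => j.
rewrite !index_cat is1; case: ifP => // js1.
have := index_mem i s1; rewrite is1 => lt.
rewrite (memNindex (negbT js1)); apply/idP/idP => h.
  by move: (leq_ltn_trans (leq_addr _ _) h); rewrite ltnNge ltnW.
by move: (ltn_trans h lt); rewrite ltnn.
Qed.

Lemma first_weight_catr S s1 s2 i : ordering S s1 -> i \in s2 -> i \notin s1 ->
  (forall j, j \in s2 -> j \notin s1) ->
  first_weight (s1 ++ s2) i = miss S * first_weight s2 i.
Proof.
move=> [u1 m1] is2 ins1 dis; rewrite /first_weight mulrCA; congr (_ * _).
rewrite (bigID (fun j => j \in s1)) /=; congr (_ * _).
  apply: eq_bigl => j; rewrite !index_cat (negbTE ins1) -m1.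
  case: ifP => js1; rewrite ?andbT ?andbF //.
  by move: (index_mem j s1); rewrite js1 => h; apply: (leq_trans h); rewrite leq_addr.
apply: eq_bigl => j; rewrite !index_cat (negbTE ins1).
case: ifP => js1 /=; last by rewrite ltn_add2l andbT.
rewrite andbF; apply/esym/negbTE; apply/negP => h.
have : j \in s2 by rewrite -index_mem (ltn_trans h) // index_mem.
by move/dis; rewrite js1.
Qed.

Definition mix_cat (m1 m2 : seq (R * seq 'I_k)) : seq (R * seq 'I_k) :=
  [seq (x.1 * y.1, x.2 ++ y.2) | x <- m1, y <- m2].

Lemma big_mix_cat m1 m2 (F : R * seq 'I_k -> R) :
  \sum_(z <- mix_cat m1 m2) F z =
  \sum_(x <- m1) \sum_(y <- m2) F (x.1 * y.1, x.2 ++ y.2).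
Proof.
have -> : mix_cat m1 m2 = map (fun xy => (xy.1.1 * xy.2.1, xy.1.2 ++ xy.2.2))
                              [seq (x, y) | x <- m1, y <- m2] by rewrite map_allpairs.
by rewrite big_map big_allpairs.
Qed.

Lemma achievable_cat (V S : {set 'I_k}) r1 r2 : S \subset V ->
  achievable S r1 -> achievable (V :\: S) r2 ->
  achievable V (fun i => if i \in S then r1 i else miss S * r2 i).
Proof.
move=> sSV [m1 [h1 s1 v1]] [m2 [h2 s2 v2]].
exists (mix_cat m1 m2); split.
- move=> z /allpairsP [[x y] [xm ym ->]] /=.
  case: (h1 x xm) => x0 [ux mx]; case: (h2 y ym) => y0 [uy my].
  split; first by rewrite mulr_ge0.
  split.
    rewrite cat_uniq ux uy /= andbT; apply/hasPn => j; rewrite my mx !inE.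
    by case/andP=> ->.
  move=> j; rewrite mem_cat mx my !inE.
  by case jS: (j \in S) => //=; rewrite (subsetP sSV).
- rewrite big_mix_cat /=; under eq_bigr do rewrite -mulr_sumr s2 mulr1.
  exact: s1.
move=> i iV; rewrite big_mix_cat /=; case: ifP => iS.
  apply: (le_trans (v1 i iS)); rewrite le_eqVlt; apply/orP; left; apply/eqP.
  apply: eq_big_seq => x xm; have [_ [_ mx]] := h1 x xm.
  rewrite -[LHS]mulr1 -s2 mulr_sumr; apply: eq_big_seq => y ym.
  by rewrite first_weight_catl ?mx // mulrAC.
have iVS : i \in V :\: S by rewrite !inE iS iV.
have -> : \sum_(x <- m1) \sum_(y <- m2) x.1 * y.1 * first_weight (x.2 ++ y.2) i =
          \sum_(x <- m1) x.1 * (miss S * \sum_(y <- m2) y.1 * first_weight y.2 i).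
  apply: eq_big_seq => x xm; have [_ ox] := h1 x xm.
  rewrite !mulr_sumr; apply: eq_big_seq => y ym; have [_ [uy my]] := h2 y ym.
  rewrite (@first_weight_catr S) //; last 3 first.
  + by rewrite my.
  + by rewrite ox.2 iS.
  + by move=> j; rewrite my ox.2 !inE => /andP [].
  by rewrite -!mulrA; congr (_ * _); rewrite mulrCA.
by rewrite -mulr_suml s1 mul1r ler_wpM2l ?miss_ge0 ?v2.
Qed.

Definition slack (r : 'I_k -> R) (S : {set 'I_k}) : R :=
  1 - miss S - \sum_(i in S) r i.

Definition tight (r : 'I_k -> R) (S : {set 'I_k}) : bool :=
  1 - miss S <= \sum_(i in S) r i.

Definition proper_tight (V : {set 'I_k}) (r : 'I_k -> R) : bool :=
  [exists S : {set 'I_k}, [&& S \subset V, S != set0, S != V & tight r S]].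

Lemma feasible_sub (V W : {set 'I_k}) r : W \subset V -> feasible V r -> feasible W r.
Proof. by move=> sWV fr S sSW; apply: fr (subset_trans sSW sWV). Qed.

Lemma feasible_contract (V S : {set 'I_k}) r : feasible V r -> S \subset V ->
  tight r S -> feasible (V :\: S) (fun i => r i / miss S).
Proof.
move=> fr sSV tS T sT.
have dTS : [disjoint T & S].
  by rewrite disjoint_subset; apply/subsetP => x /(subsetP sT); rewrite !inE => /andP [].
have [mS0|mS_neq0] := eqVneq (miss S) 0.
  by rewrite mS0 invr0 big1 ?subr_ge0 ?miss_le1 // => x _; rewrite mulr0.
have mS_gt0 : 0 < miss S by rewrite lt_def mS_neq0 miss_ge0.
have := fr (T :|: S); rewrite subUset sSV (subset_trans sT (subsetDl _ _)).
rewrite sumU // missU // => /(_ isT) fTS.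
rewrite -mulr_suml ler_pdivrMr //.
have := miss_ge0 T; have := miss_le1 T; move: tS; rewrite /tight; nra.
Qed.

Lemma contract_bound (V S : {set 'I_k}) r i : feasible V r -> S \subset V ->
  tight r S -> i \in V :\: S -> r i <= miss S * (r i / miss S).
Proof.
move=> fr sSV tS; rewrite !inE => /andP [iS iV].
have [mS0|mS_neq0] := eqVneq (miss S) 0; last by rewrite mulrC divfK.
have := fr (i |: S); rewrite subUset sub1set iV sSV /miss big_setU1 //= big_setU1 //=.
rewrite -/(miss S) mS0 mulr0 mul0r => /(_ isT).
by move: tS; rewrite /tight mS0; lra.
Qed.

Definition dir (i j x : 'I_k) : R := (x == i)%:R - (x == j)%:R.

Lemma dirC i j x : dir j i x = - dir i j x.
Proof. by rewrite /dir opprB. Qed.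

Lemma sum_shift (T : {set 'I_k}) (r : 'I_k -> R) t i j :
  \sum_(x in T) (r x + t * dir i j x) =
  \sum_(x in T) r x + t * ((i \in T)%:R - (j \in T)%:R).
Proof.
have sum_eq (l : 'I_k) : \sum_(x in T) ((x == l)%:R : R) = (l \in T)%:R.
  case lT: (l \in T); last by rewrite big1 // => x xT; case: eqP => // xl; rewrite -xl xT in lT.
  by rewrite (bigD1 l) //= eqxx big1 ?addr0 // => x /andP [_ /negbTE ->].
by rewrite big_split /= -mulr_sumr sumrB !sum_eq.
Qed.

(* Without a proper tight set, r can be moved a positive amount along
   e_i - e_j, staying feasible, until a proper set becomes tight: the step is
   the least slack of a subset of V containing i but not j. *)
Lemma shift_to_tight (V : {set 'I_k}) r i j : feasible V r -> ~~ proper_tight V r ->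
  i \in V -> j \in V -> i != j ->
  exists2 t, 0 < t & feasible V (fun x => r x + t * dir i j x) /\
                     proper_tight V (fun x => r x + t * dir i j x).
Proof.
move=> fr no_tight iV jV ij.
pose P (T : {set 'I_k}) := [&& T \subset V, i \in T & j \notin T].
have PVj : P (V :\ j) by rewrite /P subsetDl !inE eqxx iV ij.
case: (arg_minP (slack r) PVj) => S /and3P [sSV iS jS] Smin.
have S0 : S != set0 by apply/set0Pn; exists i.
have SV : S != V by apply: contraNneq jS => ->.
have t_gt0 : 0 < slack r S.
  rewrite subr_gt0 ltNge; apply: contraNN no_tight => tS.
  by apply/existsP; exists S; rewrite sSV S0 SV.
exists (slack r S) => //; split.
  move=> T sTV; rewrite sum_shift; have fT := fr T sTV; move: t_gt0.
  case iT: (i \in T); case jT: (j \in T) => /=; rewrite ?subrr ?mulr0 ?addr0 //.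
  - by have := Smin T; rewrite /P sTV iT jT /slack => /(_ isT); lra.
  - by rewrite /slack; lra.
apply/existsP; exists S; rewrite sSV S0 SV /tight sum_shift iS (negbTE jS).
by rewrite /slack /= subr0 mulr1; lra.
Qed.

Lemma achievable_of_proper_tight (V : {set 'I_k}) r :
  (forall (W : {set 'I_k}) r', (#|W| < #|V|)%N -> feasible W r' -> achievable W r') ->
  feasible V r -> proper_tight V r -> achievable V r.
Proof.
move=> IH fr /existsP [S /and4P [sSV S0 SV tS]].
have ltSV : (#|S| < #|V|)%N by apply: proper_card; rewrite properEneq SV sSV.
have ltVSV : (#|V :\: S| < #|V|)%N.
  by rewrite cardsDS // ltn_subrL card_gt0 S0 (leq_ltn_trans _ ltSV).
have hS := IH S r ltSV (feasible_sub sSV fr).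
have hVS := IH _ _ ltVSV (feasible_contract fr sSV tS).
apply: (achievable_mono (achievable_cat sSV hS hVS)) => i iV.
case: ifP => iS //; apply: contract_bound fr sSV tS _.
by rewrite !inE iS iV.
Qed.

Theorem feasible_achievable (V : {set 'I_k}) r : feasible V r -> achievable V r.
Proof.
have [n] := ubnP #|V|; elim: n V r => // n IH V r ltVn fr.
have IHV (W : {set 'I_k}) r' : (#|W| < #|V|)%N -> feasible W r' -> achievable W r'.
  by move=> ltWV; apply: IH; apply: leq_trans ltWV _.
have [small|two] := leqP #|V| 1; first exact: achievable_small.
have [split_tight|no_tight] := boolP (proper_tight V r).
  exact: achievable_of_proper_tight IHV fr split_tight.
have [i [j [iV jV ij]]] := card_gt1P two.
have ji : j != i by rewrite eq_sym.
have [t1 t1_gt0 [f1 tight1]] := shift_to_tight fr no_tight iV jV ij.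
have [t2 t2_gt0 [f2 tight2]] := shift_to_tight fr no_tight jV iV ji.
apply: (achievable_between (d := dir i j) t1_gt0 t2_gt0).
  exact: achievable_of_proper_tight IHV f1 tight1.
apply: (achievable_mono (achievable_of_proper_tight IHV f2 tight2)) => x _.
by rewrite /= dirC mulrN opprK.
Qed.

End Orderings.

Section Permutations.
Variables (R : realFieldType) (k : nat).

Definition positions (s : seq 'I_k) (pi : {perm 'I_k}) : bool :=
  [forall j, pi j == index j s :> nat].

Lemma positions_unique s : ordering [set: 'I_k] s ->
  exists pi0, positions s =1 pred1 pi0.
Proof.
move=> [us ms]; have alls j : j \in s by rewrite ms inE.
have size_s : size s = k.
  by rewrite -(card_uniqP us) -[RHS]card_ord; apply: eq_card => j; rewrite alls.
have lt j : (index j s < k)%N by have := index_mem j s; rewrite alls size_s.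
have pos_inj : injective (fun j => Ordinal (lt j)).
  move=> a b /(congr1 val) /= eq_ab.
  by rewrite -(nth_index a (alls a)) eq_ab (nth_index a (alls b)).
exists (perm pos_inj) => pi; apply/forallP/eqP => [pos_pi|-> j].
  by apply/permP => j; apply/val_inj; rewrite permE /=; apply/eqP.
by rewrite permE.
Qed.

Definition mixture_perm (m : seq (R * seq 'I_k)) (pi : {perm 'I_k}) : R :=
  \sum_(x <- m | positions x.2 pi) x.1.

Lemma sum_mixture_perm m (F : {perm 'I_k} -> R) (G : R * seq 'I_k -> R) :
  (forall x, x \in m -> ordering [set: 'I_k] x.2) ->
  (forall x pi, x \in m -> positions x.2 pi -> F pi = G x) ->
  \sum_pi mixture_perm m pi * F pi = \sum_(x <- m) x.1 * G x.
Proof.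
move=> hm hFG; under eq_bigr do rewrite /mixture_perm mulr_suml big_mkcond.
rewrite exchange_big /=; apply: eq_big_seq => x xm.
have [pi0 pos0] := positions_unique (hm x xm).
rewrite -big_mkcond (big_pred1 _ pos0) (hFG x pi0 xm) //.
by rewrite pos0 /=.
Qed.

End Permutations.

Section Independence.
Variables (R : realFieldType) (k : nat) (Omega : finType) (mu : Omega -> R).
Variable A : 'I_k -> {set Omega}.
Hypothesis A_indep : mutually_independent mu A.

Lemma Pr_setID (Y B : {set Omega}) : Pr mu (Y :&: ~: B) = Pr mu Y - Pr mu (Y :&: B).
Proof. by rewrite [Pr mu Y](big_setID B) /= setDE addrAC subrr add0r. Qed.

Lemma Pr_occur_avoid (I J : {set 'I_k}) : [disjoint I & J] ->
  Pr mu ((\bigcap_(j in I) A j) :&: \bigcap_(j in J) ~: A j) =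
  \prod_(j in I) Pr mu (A j) * \prod_(j in J) (1 - Pr mu (A j)).
Proof.
have [n] := ubnP #|J|; elim: n I J => // n IH I J ltJn dIJ.
have [->|[j jJ]] := set_0Vmem J; first by rewrite !big_set0 setIT mulr1 A_indep.
have ltJn' : (#|J :\ j| < n)%N by move: ltJn; rewrite (cardsD1 j J) jJ.
have jI : j \notin I by apply: contraTN jJ => /(disjointFr dIJ) ->.
have dIJ' : [disjoint I & J :\ j] by apply: disjointWr dIJ; apply: subsetDl.
have djIJ' : [disjoint j |: I & J :\ j].
  by rewrite -setI_eq0 setIUl setU_eq0 !setI_eq0 disjoints1 dIJ' !inE eqxx.
have occur := IH I _ ltJn' dIJ'.
have occur_j := IH (j |: I) _ ltJn' djIJ'.
rewrite !big_setU1 //= in occur_j.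
rewrite (big_setD1 j jJ) [in RHS](big_setD1 j jJ) /=.
set X := \bigcap_(i in I) A i; set Z := \bigcap_(i in J :\ j) ~: A i.
rewrite [~: A j :&: Z]setIC setIA Pr_setID occur.
have -> : X :&: Z :&: A j = A j :&: X :&: Z by rewrite setIC setIA.
by rewrite occur_j; ring.
Qed.

Lemma Pr_first_event (s : seq 'I_k) (pi : {perm 'I_k}) i : positions s pi ->
  Pr mu (first_event A pi i) = first_weight (fun j => Pr mu (A j)) s i.
Proof.
move=> /forallP pos; rewrite /first_event /first_weight.
have -> : \bigcap_(j | (pi j < pi i)%N) ~: A j =
          \bigcap_(j in [set j | (index j s < index i s)%N]) ~: A j.
  by apply: eq_bigl => j; rewrite inE !(eqP (pos _)).
rewrite [in LHS](_ : A i = \bigcap_(j in [set i]) A j); last by rewrite big_set1.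
rewrite Pr_occur_avoid; last by rewrite disjoints1 inE ltnn.
by rewrite big_set1; congr (_ * _); apply: eq_bigl => j; rewrite inE.
Qed.

End Independence.

Lemma Pr_ge0 (R : realFieldType) (Omega : finType) (mu : Omega -> R) E :
  is_distr mu -> 0 <= Pr mu E.
Proof. by move=> [mu_ge0 _]; apply: sumr_ge0. Qed.

Lemma Pr_le1 (R : realFieldType) (Omega : finType) (mu : Omega -> R) E :
  is_distr mu -> Pr mu E <= 1.
Proof.
move=> [mu_ge0 <-]; rewrite /Pr [X in _ <= X](bigID (mem E)) /=.
by rewrite lerDl sumr_ge0.
Qed.

Unset Implicit Arguments. Set Strict Implicit.

Theorem lemma1 (R : realFieldType) (k : nat) (Omega : finType)
    (mu : Omega -> R) (A : 'I_k -> {set Omega}) (p r : 'I_k -> R) :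
  is_distr mu ->
  mutually_independent mu A ->
  (forall i, Pr mu (A i) = p i) ->
  (forall i, 0 <= r i) ->
  (forall S : {set 'I_k}, \sum_(i in S) r i <= 1 - \prod_(i in S) (1 - p i)) ->
  exists q : {perm 'I_k} -> R,
    is_distr q /\
    (forall i, r i <= \sum_(pi : {perm 'I_k}) q pi * Pr mu (first_event A pi i)).
Proof.
move=> mu_distr A_indep hp _ r_cover.
pose pA i := Pr mu (A i).
have pA_ge0 i : 0 <= pA i by apply: Pr_ge0.
have pA_le1 i : pA i <= 1 by apply: Pr_le1.
have fr : feasible pA [set: 'I_k] r.
  by move=> S _; rewrite /miss; under eq_bigr do rewrite /pA hp.
have [m [hm m1 mr]] := feasible_achievable pA_ge0 pA_le1 fr.
have orders (x : R * seq 'I_k) : x \in m -> ordering [set: 'I_k] x.2 by move=> /hm [].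
exists (mixture_perm m); split; first split.
- move=> pi; rewrite /mixture_perm big_seq_cond sumr_ge0 // => x /andP [/hm [] //].
- rewrite -m1; under eq_bigr do rewrite -[mixture_perm _ _]mulr1.
  rewrite (sum_mixture_perm (G := fun _ => 1) orders) //.
  by under eq_bigr do rewrite mulr1.
- move=> i; rewrite (sum_mixture_perm (G := fun x => first_weight pA x.2 i) orders).
    exact: mr.
  by move=> x pi _; apply: Pr_first_event.
Qed.
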